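(* The rule specifying (a) an object $E[l]=\mathsf{R}^l$ of $\Sigma$ for every $l\in\mathbb{N}$ and (b) a morphism $Ef:E[l]\to E[m]$ given by $Ef(x)_s=\sum_{r\in[l],f(r)=s}x_r$ with $s\in[m]$ and $x\in E[l]$, for every $l,m\in\mathbb{N}$ and $f\in\mathrm{Hom}_\Omega([l],[m])$, defines a functor $E:\Omega\rightarrow\Sigma$ injective on objects and morphisms. Hence, there exists an $\Omega$ category $E\Omega$ having the functor $E$ with the target category restricted from $\Sigma$ to $E\Omega$ as its stalk isofunctor. Furthermore, $E\Omega$ is a non monoidal subcategory of $\Sigma$.
   Context: $\mathsf{R}$ is an additive finite commutative monoid with $\mathsf{R}\neq0$; $\mathsf{R}^l$ is regarded as a set, with $E[0]=0$. $\Sigma$ is the category of finite sets and functions; $\Omega$ the category of finite ordinals $[l]=\{0,\dots,l-1\}$ and all functions, strict monoidal with $[l]\smile[m]=[l+m]$, $f\smile g(i)=f(i)$ for $i\in[l]$ and $g(i-l)+p$ for $i\in[m]+l$ (for $f:[l]\to[p]$, $g:[m]\to[q]$), unit $[0]$. An $\Omega$ category is a Pro category $D\Omega$ with a strict monoidal isofunctor (stalk isofunctor) $D:\Omega\to D\Omega$; for $D$ injective on objects and morphisms, $D\Omega$ has objects $D[l]$, morphisms $Df$, composition $D(g\circ f)$, identities $D\,\mathrm{id}_{[l]}$, monoidal products $D[l]\smile D[m]=D([l]\smile[m])$, $Df\smile Dg=D(f\smile g)$, unit $D[0]$. *)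

From HB Require Import structures.
From mathcomp Require Import all_boot all_order all_algebra.
Set Implicit Arguments. Unset Strict Implicit. Unset Printing Implicit Defensive.
Import GRing.Theory.
Local Open Scope ring_scope.

(* R : a finite additive commutative monoid (finNmodType).
   Objects of Sigma: finite sets; E[l] = R^l is the finite set l.-tuple R,
   which is literally the subset of seq R of sequences of size l. *)

(* E[l] as a subset of the common ambient type seq R (used to compare objects). *)
Definition Eob (R : finNmodType) (l : nat) : pred (seq R) :=
  [pred s : seq R | size s == l].

Definition Emor (R : finNmodType) (l m : nat) (f : 'I_l -> 'I_m)
  (x : l.-tuple R) : m.-tuple R :=
  [tuple \sum_(r < l | f r == s) tnth x r | s < m].

(** Functoriality of [E] is the regrouping of a sum over the fibres of [g \o f]
    into sums over the fibres of [f].  [E f] sends the point mass [a] at [r]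
    to the point mass [a] at [f r], so [E] is faithful as soon as some [a] is
    nonzero; objects are told apart by the length of their tuples.  Finally
    [E[l] ⌣ E[m] = E[l+m]] has [|R|^(l+m)] elements, more than the
    [|R|^l + |R|^m] of the coproduct [E[l] ⊔ E[m]] once [|R| > 1] and
    [l, m > 1], so the monoidal product of [Ω] is not carried to that of [Σ]. *)

From HB Require Import structures.
From mathcomp Require Import all_boot all_order all_algebra.
From mathcomp Require Import zify.
Local Open Scope ring_scope.
Import GRing.Theory.

Section StalkFunctor.

Variable R : finNmodType.

Lemma tnth_Emor (l m : nat) (f : 'I_l -> 'I_m) (x : l.-tuple R) (s : 'I_m) :
  tnth (Emor f x) s = \sum_(r < l | f r == s) tnth x r.
Proof. by rewrite tnth_mktuple. Qed.

Lemma Emor_id (l : nat) (x : l.-tuple R) : Emor id x = x.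
Proof.
by apply: eq_from_tnth => s; rewrite tnth_Emor (big_pred1_eq _ s).
Qed.

Lemma Emor_comp (l m n : nat) (f : 'I_l -> 'I_m) (g : 'I_m -> 'I_n)
    (x : l.-tuple R) :
  Emor (g \o f) x = Emor g (Emor f x).
Proof.
apply: eq_from_tnth => u; rewrite !tnth_Emor.
rewrite (partition_big f (fun t => g t == u)) //=.
apply: eq_bigr => t gtu; rewrite tnth_Emor.
by apply: eq_bigl => r /=; case: (f r =P t) => [->|]; rewrite ?gtu ?andbF.
Qed.

Lemma Eob_inj (l l' : nat) : @Eob R l =i @Eob R l' -> l = l'.
Proof.
by move/(_ (nseq l 0)); rewrite !inE size_nseq eqxx => /esym/eqP.
Qed.

Definition point_mass {l : nat} (r : 'I_l) (a : R) : l.-tuple R :=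
  [tuple if i == r then a else 0 | i < l].

Lemma Emor_point_mass (l m : nat) (f : 'I_l -> 'I_m) (r : 'I_l) (a : R) :
  Emor f (point_mass r a) = point_mass (f r) a.
Proof.
apply: eq_from_tnth => s; rewrite tnth_Emor tnth_mktuple.
under eq_bigr do rewrite tnth_mktuple.
rewrite big_mkcond /= (bigD1 r) //= eqxx big1 ?addr0 ?(eq_sym s) //.
by move=> i /negbTE ->; case: (f i == s).
Qed.

Lemma point_mass_inj {l : nat} (a : R) :
  a != 0 -> injective (fun r : 'I_l => point_mass r a).
Proof.
move=> a0 r r' /(congr1 (fun t => tnth t r)); rewrite !tnth_mktuple eqxx.
by case: eqP => // _ /eqP; rewrite (negbTE a0).
Qed.

Lemma Emor_inj (l m : nat) (f g : 'I_l -> 'I_m) :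
  (exists a : R, a != 0) ->
  (forall x : l.-tuple R, Emor f x = Emor g x) -> f =1 g.
Proof.
move=> [a a0] fg r; apply: (point_mass_inj _ a0).
by rewrite -!Emor_point_mass fg.
Qed.

Lemma card_sum_tuple_lt (l m : nat) :
  (1 < #|R|)%N -> (1 < l)%N -> (1 < m)%N ->
  (#|{: l.-tuple R + m.-tuple R}| < #|{: (l + m).-tuple R}|)%N.
Proof.
move=> R_gt1 l_gt1 m_gt1; rewrite card_sum !card_tuple expnD.
have pow_gt2 n : (1 < n)%N -> (2 < #|R| ^ n)%N.
  move=> n_gt1; apply: leq_trans (leq_pexp2l _ n_gt1); first nia.
  exact: ltnW.
move: (pow_gt2 _ l_gt1) (pow_gt2 _ m_gt1).
by move: (#|R| ^ l)%N (#|R| ^ m)%N => a b; nia.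
Qed.

End StalkFunctor.

Theorem proposition4p1 (R : finNmodType) (hR : exists x : R, x != 0) :
  (* functoriality: identities *)
  (forall (l : nat) (x : l.-tuple R), Emor (@id 'I_l) x = x) /\
  (* functoriality: composition *)
  (forall (l m n : nat) (f : 'I_l -> 'I_m) (g : 'I_m -> 'I_n) (x : l.-tuple R),
      Emor (g \o f) x = Emor g (Emor f x)) /\
  (* injective on objects *)
  (forall l l' : nat, @Eob R l =i @Eob R l' -> l = l') /\
  (* injective on morphisms *)
  (forall (l m : nat) (f g : 'I_l -> 'I_m),
      (forall x : l.-tuple R, Emor f x = Emor g x) -> f =1 g) /\
  (* E Omega is not a monoidal subcategory of (Sigma, disjoint union):
     E[l] ⌣ E[m] = E[l+m] is not the coproduct E[l] ⊔ E[m] *)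
  (exists l m : nat,
      #|{: l.-tuple R + m.-tuple R}| != #|{: (l + m).-tuple R}|)%N.
Proof.
have R_gt1 : (1 < #|R|)%N.
  by have [a a0] := hR; apply/card_gt1P; exists a, 0; rewrite !inE.
split; first exact: Emor_id.
split; first exact: Emor_comp.
split; first exact: Eob_inj.
split; first by move=> l m f g; exact: Emor_inj.
by exists 2%N, 2%N; rewrite neq_ltn card_sum_tuple_lt.
Qed.
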